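(* If $f:2^\omega\to\mathbb R$ is continuous and $g:2^\omega\to\mathbb R$ is non-constant, then $f\le_{\mathbf m} g$.
   Context: Questions: for $y\in\mathbb R$, $p\in\mathbb Q$, $\varepsilon\in\mathbb Q^+$, a bit $b\in\{0,1\}$ is a correct answer to ''$y\lesssim_\varepsilon p$'' if either $b=1$ and $y<p+\varepsilon$, or $b=0$ and $y>p-\varepsilon$. $f\le_{\mathbf m} g$ means: for every $p\in\mathbb Q,\varepsilon\in\mathbb Q^+$ there are $q\in\mathbb Q,\delta\in\mathbb Q^+$ and a continuous $k:2^\omega\to2^\omega$ such that for every $A\in2^\omega$, every correct answer to $g(k(A))\lesssim_\delta q$ is a correct answer to $f(A)\lesssim_\varepsilon p$. *)

From Stdlib Require Import Reals QArith Qreals.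
Open Scope R_scope.

Definition Cantor := nat -> bool.

Definition agree (n : nat) (A B : Cantor) : Prop :=
  forall i, (i < n)%nat -> A i = B i.

Definition cont_CC (k : Cantor -> Cantor) : Prop :=
  forall (A : Cantor) (n : nat), exists m : nat,
    forall B : Cantor, agree m A B -> agree n (k A) (k B).

Definition cont_CR (f : Cantor -> R) : Prop :=
  forall (A : Cantor) (e : R), 0 < e -> exists m : nat,
    forall B : Cantor, agree m A B -> Rabs (f B - f A) < e.

(* b is a correct answer to "y <~_eps p". *)
Definition correct_answer (y : R) (p eps : Q) (b : bool) : Prop :=
  (b = true /\ y < Q2R p + Q2R eps) \/ (b = false /\ y > Q2R p - Q2R eps).

Definition m_reducible (f g : Cantor -> R) : Prop :=
  forall (p eps : Q), (0 < eps)%Q ->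
    exists (q delta : Q), (0 < delta)%Q /\
      exists k : Cantor -> Cantor, cont_CC k /\
        forall (A : Cantor) (b : bool),
          correct_answer (g (k A)) q delta b -> correct_answer (f A) p eps b.

From Stdlib Require Import Reals QArith Qreals.
From Stdlib Require Import Lra Lia ClassicalEpsilon ConstructiveEpsilon.
Open Scope R_scope.

(* Pick X, Y with g X < g Y and a rational query (q, delta)
   separating them: g X < q - delta and q + delta < g Y.  Every correct
   answer about g X is then 1 and every correct answer about g Y is 0, so it
   suffices to find a continuous k with values in {X, Y} that sends A to X
   only when f A < p + eps and to Y only when f A > p - eps.  By continuity of
   f, every A has a basic neighbourhood contained in one of these two open
   sets; taking the LEAST such length, and deciding by the corresponding
   neighbourhood, gives a locally constant, hence continuous, selector. *)

Lemma agree_refl (n : nat) (A : Cantor) : agree n A A.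
Proof. intros i _; reflexivity. Qed.

Lemma agree_sym (n : nat) (A B : Cantor) : agree n A B -> agree n B A.
Proof. intros H i Hi; symmetry; auto. Qed.

Lemma agree_trans (n : nat) (A B C : Cantor) :
  agree n A B -> agree n B C -> agree n A C.
Proof. intros H1 H2 i Hi; rewrite H1, H2; auto. Qed.

Lemma agree_weaken (n m : nat) (A B : Cantor) :
  (n <= m)%nat -> agree m A B -> agree n A B.
Proof. intros Hnm H i Hi; apply H; lia. Qed.

Lemma locally_constant_cont (k : Cantor -> Cantor) :
  (forall A, exists m, forall B, agree m A B -> k B = k A) -> cont_CC k.
Proof.
  intros Hk A n. destruct (Hk A) as [m Hm]. exists m.
  intros B HB. rewrite (Hm B HB). apply agree_refl.
Qed.

Definition inside (m : nat) (A : Cantor) (P : Cantor -> Prop) : Prop :=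
  forall B, agree m A B -> P B.

Lemma inside_agree (m : nat) (A B : Cantor) (P : Cantor -> Prop) :
  agree m A B -> inside m A P -> inside m B P.
Proof. intros HAB H C HBC. apply H. exact (agree_trans _ _ _ _ HAB HBC). Qed.

Section LocallyConstantSelector.

Variables U V : Cantor -> Prop.
Hypothesis open_cover : forall A, exists m, inside m A U \/ inside m A V.

Definition covered (m : nat) (A : Cantor) : Prop := inside m A U \/ inside m A V.

Lemma covered_agree (m : nat) (A B : Cantor) :
  agree m A B -> covered m A -> covered m B.
Proof.
  intros H [HU|HV]; [left|right]; eapply inside_agree; eassumption.
Qed.

Definition modulus (A : Cantor) : nat :=
  proj1_sig (epsilon_smallest (fun m => covered m A)
               (fun m => excluded_middle_informative (covered m A))
               (open_cover A)).

Lemma modulus_spec (A : Cantor) :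
  covered (modulus A) A /\ forall k, covered k A -> (modulus A <= k)%nat.
Proof. unfold modulus. destruct epsilon_smallest as [m Hm]; exact Hm. Qed.

(* Minimality makes the modulus constant on the neighbourhood it defines. *)
Lemma modulus_local (A B : Cantor) :
  agree (modulus A) A B -> modulus B = modulus A.
Proof.
  intros HAB.
  destruct (modulus_spec A) as [covA minA], (modulus_spec B) as [covB minB].
  assert (le_BA : (modulus B <= modulus A)%nat)
    by exact (minB _ (covered_agree _ _ _ HAB covA)).
  assert (le_AB : (modulus A <= modulus B)%nat).
  { apply minA. apply (covered_agree _ B); [|exact covB].
    apply agree_sym; exact (agree_weaken _ _ _ _ le_BA HAB). }
  lia.
Qed.

Definition selector (A : Cantor) : bool :=
  if excluded_middle_informative (inside (modulus A) A U) then true else false.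

Lemma selector_local (A B : Cantor) :
  agree (modulus A) A B -> selector B = selector A.
Proof.
  intros HAB. unfold selector. rewrite (modulus_local _ _ HAB).
  destruct (excluded_middle_informative (inside (modulus A) A U)) as [HA|HA],
           (excluded_middle_informative (inside (modulus A) B U)) as [HB|HB];
    auto.
  - exfalso; exact (HB (inside_agree _ _ _ _ HAB HA)).
  - exfalso; exact (HA (inside_agree _ _ _ _ (agree_sym _ _ _ HAB) HB)).
Qed.

Lemma selector_correct (A : Cantor) : if selector A then U A else V A.
Proof.
  unfold selector.
  destruct (excluded_middle_informative (inside (modulus A) A U)) as [HU|HU].
  - exact (HU A (agree_refl _ _)).
  - destruct (proj1 (modulus_spec A)) as [H|H]; [contradiction|].
    exact (H A (agree_refl _ _)).
Qed.

End LocallyConstantSelector.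

Lemma threshold_open_cover (f : Cantor -> R) (c e : R) :
  cont_CR f -> 0 < e -> forall A, exists m,
    inside m A (fun B => f B < c + e) \/ inside m A (fun B => f B > c - e).
Proof.
  intros Hf He A. destruct (Hf A e He) as [m Hm]. exists m.
  destruct (Rle_or_lt (f A) c); [left|right];
    intros B HB; specialize (Hm B HB); apply Rabs_def2 in Hm; lra.
Qed.

Lemma Q_between (x y : R) : x < y -> exists r : Q, x < Q2R r < y.
Proof.
  intros Hxy.
  destruct (archimed (/ (y - x))) as [Hn _].
  set (n := up (/ (y - x))) in *.
  assert (Hinv : 0 < / (y - x)) by (apply Rinv_0_lt_compat; lra).
  assert (n_pos : (0 < n)%Z) by (apply lt_IZR; lra).
  assert (Hnr : 0 < IZR n) by (apply IZR_lt; exact n_pos).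
  assert (Hgap : 1 < (y - x) * IZR n).
  { replace 1 with ((y - x) * / (y - x)) by (field; lra).
    apply Rmult_lt_compat_l; lra. }
  destruct (archimed (x * IZR n)) as [Hz1 Hz2].
  exists (up (x * IZR n) # Z.to_pos n).
  unfold Q2R; simpl. rewrite Z2Pos.id by exact n_pos.
  split.
  - apply Rmult_lt_reg_r with (IZR n); [exact Hnr|].
    rewrite Rmult_assoc, Rinv_l by lra. lra.
  - apply Rmult_lt_reg_r with (IZR n); [exact Hnr|].
    rewrite Rmult_assoc, Rinv_l by lra. lra.
Qed.

Lemma rational_query_between (x y : R) : x < y ->
  exists q d : Q, (0 < d)%Q /\ x < Q2R q - Q2R d /\ Q2R q + Q2R d < y.
Proof.
  intros Hxy.
  destruct (Q_between x y Hxy) as [q Hq].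
  destruct (Q_between 0 (Rmin (Q2R q - x) (y - Q2R q))) as [d Hd].
  { apply Rmin_glb_lt; lra. }
  exists q, d.
  pose proof (Rmin_l (Q2R q - x) (y - Q2R q)).
  pose proof (Rmin_r (Q2R q - x) (y - Q2R q)).
  split; [|lra].
  apply Rlt_Qlt. unfold Q2R at 1; simpl. lra.
Qed.

Lemma correct_answer_below (y : R) (q d : Q) (b : bool) :
  y < Q2R q - Q2R d -> correct_answer y q d b -> b = true.
Proof. intros Hy [[Hb _]|[_ H]]; [exact Hb|lra]. Qed.

Lemma correct_answer_above (y : R) (q d : Q) (b : bool) :
  Q2R q + Q2R d < y -> correct_answer y q d b -> b = false.
Proof. intros Hy [[_ H]|[Hb _]]; [lra|exact Hb]. Qed.

Lemma nonconstant_ordered (g : Cantor -> R) :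
  (exists A B : Cantor, g A <> g B) -> exists X Y : Cantor, g X < g Y.
Proof.
  intros [A [B Hne]].
  destruct (Rlt_or_le (g A) (g B)); [exists A, B | exists B, A]; lra.
Qed.

Theorem mainTheorem18 (f g : Cantor -> R) :
  cont_CR f -> (exists A B : Cantor, g A <> g B) -> m_reducible f g.
Proof.
  intros Hf Hg p eps Heps.
  destruct (nonconstant_ordered g Hg) as [X [Y HXY]].
  destruct (rational_query_between _ _ HXY) as [q [d [Hd [HX HY]]]].
  exists q, d. split; [exact Hd|].
  assert (Heps_r : 0 < Q2R eps)
    by (apply Qlt_Rlt in Heps; unfold Q2R in Heps at 1; simpl in Heps; lra).
  pose proof (threshold_open_cover f (Q2R p) (Q2R eps) Hf Heps_r) as cover.
  exists (fun A => if selector _ _ cover A then X else Y). split.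
  - apply locally_constant_cont. intros A.
    exists (modulus _ _ cover A). intros B HB.
    rewrite (selector_local _ _ cover _ _ HB). reflexivity.
  - intros A b Hb. pose proof (selector_correct _ _ cover A) as Hsel.
    destruct (selector _ _ cover A).
    + rewrite (correct_answer_below _ _ _ _ HX Hb). left; auto.
    + rewrite (correct_answer_above _ _ _ _ HY Hb). right; auto.
Qed.
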